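(* Consider the SBBS with $d=2$ balls, error probability $\varepsilon\in(0,1)$ and capacity $c\ge2$, with gap process $(W_t)_{t\ge0}$ on $\mathbb Z_{\ge0}$. Let $\tau=\inf\{t\ge1:W_t=0\}$. Then for every $w\in\mathbb Z_{\ge0}$, $P(\tau<\infty\mid W_0=w)=1$ and $\mathbb E[\tau\mid W_0=w]=\infty$.
   Context: Stochastic box-ball system (SBBS). Fix an error probability $\varepsilon\in[0,1]$ and a capacity $c\in\{1,2,\dots\}\cup\{\infty\}$. A configuration is $\zeta\in\{0,1\}^{\mathbb N}$, $\mathbb N=\{1,2,\dots\}$, with finitely many $1$'s (balls). Given $\zeta$, the stochastic carrier process $\Gamma$ is defined by $\Gamma(0)=0$ and recursively (with fresh independent randomness at each $k$): $\Gamma(k)=\Gamma(k-1)+1$ with probability $1-\varepsilon$ (and $\Gamma(k)=\Gamma(k-1)$ otherwise) if $\zeta(k)=1$ and $\Gamma(k-1)<c$; $\Gamma(k)=\Gamma(k-1)-1$ if $\zeta(k)=0$ and $\Gamma(k-1)\ge1$; $\Gamma(k)=\Gamma(k-1)$ otherwise. The new configuration is $\zeta'(k)=\mathbf 1(\Gamma(k)-\Gamma(k-1)=-1)+\mathbf 1(\Gamma(k)=\Gamma(k-1),\ \zeta(k)=1)$. Iterating independently gives the SBBS trajectory $(\zeta_t)_{t\in\mathbb Z_{\ge0}}$. With $d=2$ balls at positions $\zeta^{(1)}_t<\zeta^{(2)}_t$, the gap process is $W_t=\zeta^{(2)}_t-\zeta^{(1)}_t-1$, a Markov chain on $\mathbb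 Z_{\ge0}$. *)

From HB Require Import structures.
From mathcomp Require Import all_boot all_order all_algebra.
From mathcomp Require Import all_classical all_reals topology normedtype sequences.
Set Implicit Arguments. Unset Strict Implicit. Unset Printing Implicit Defensive.
Import Order.TTheory GRing.Theory Num.Theory.
Local Open Scope ring_scope.

(* Capacity c in {1,2,...} U {oo}: [Some c] is a finite capacity c,
   [None] is infinite capacity. *)
Definition capacity := option nat.
Definition below_cap (cap : capacity) (g : nat) : bool :=
  if cap is Some c then (g < c)%N else true.
Definition cap_ge2 (cap : capacity) : Prop :=
  if cap is Some c then (2 <= c)%N else True.

(* A configuration zeta in {0,1}^N with finitely many balls is represented by
   the (sorted) list s of positions k >= 1 with zeta(k) = 1. *)
Definition config := seq nat.
Definition zeta (s : config) (k : nat) : bool := k \in s.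

(* Carrier process Gamma(k), driven by coin values u k
   (u k = true  <-> the "increase" event of probability 1 - eps at site k). *)
Fixpoint carrier (cap : capacity) (s : config) (u : nat -> bool) (k : nat)
  : nat :=
  match k with
  | 0 => 0
  | k'.+1 =>
      let g := carrier cap s u k' in
      if zeta s k then (if below_cap cap g && u k then g.+1 else g)
      else g.-1
  end.

Definition new_zeta (cap : capacity) (s : config) (u : nat -> bool) (k : nat)
  : bool :=
  let g0 := carrier cap s u k.-1 in
  let g1 := carrier cap s u k in
  (0 < k)%N && ((g1.+1 == g0) || ((g1 == g0) && zeta s k)).

Definition maxpos (s : config) : nat := foldr maxn 0%N s.

(* coins at sites 1..L, given as a boolean list bs (site k uses nth bs (k-1));
   coins at sites > maxpos s are never consulted by the carrier. *)
Definition coins (bs : seq bool) (k : nat) : bool := nth false bs k.-1.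

(* New configuration; all balls lie in [1, maxpos s + size s] since the
   carrier holds at most size s balls after the last ball. *)
Definition sbbs_step (cap : capacity) (s : config) (bs : seq bool) : config :=
  [seq k <- iota 1 (maxpos s + size s) | new_zeta cap s (coins bs) k].

Fixpoint all_bseq (n : nat) : seq (seq bool) :=
  if n is n'.+1 then [seq b :: t | b <- [:: true; false], t <- all_bseq n']
  else [:: [::]].

Definition coin_weight {R : realType} (eps : R) (bs : seq bool) : R :=
  \prod_(b <- bs) (if b then 1 - eps else eps).

(* law of one SBBS step from s: finitely supported weighted list *)
Definition step_dist {R : realType} (eps : R) (cap : capacity) (s : config)
  : seq (R * config) :=
  [seq (coin_weight eps bs, sbbs_step cap s bs) | bs <- all_bseq (maxpos s)].

Fixpoint traj_dist {R : realType} (eps : R) (cap : capacity) (n : nat)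
  (s : config) : seq (R * seq config) :=
  if n is n'.+1 then
    flatten [seq [seq (x.1 * p.1, s :: p.2) | p <- traj_dist eps cap n' x.2]
            | x <- step_dist eps cap s]
  else [:: (1, [:: s])].

Definition gap (s : config) : nat := (nth 0 s 1 - nth 0 s 0).-1.

Definition gap_at (tr : seq config) (t : nat) : nat := gap (nth [::] tr t).

(* tau = inf {t >= 1 : W_t = 0};  on a trajectory of length n:
   [tau_le n tr] <-> tau <= n,   [tau_min n tr] = min(tau, n). *)
Definition tau_le (n : nat) (tr : seq config) : bool :=
  has (fun t => gap_at tr t == 0%N) (iota 1 n).
Definition tau_min (n : nat) (tr : seq config) : nat :=
  minn (find (fun t => gap_at tr t == 0%N) (iota 1 n)).+1 n.

Definition prob_tau_le {R : realType} (eps : R) (cap : capacity) (s : config)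
  (n : nat) : R :=
  \sum_(p <- traj_dist eps cap n s) p.1 * (tau_le n p.2)%:R.
Definition exp_tau_min {R : realType} (eps : R) (cap : capacity) (s : config)
  (n : nat) : R :=
  \sum_(p <- traj_dist eps cap n s) p.1 * (tau_min n p.2)%:R.

Definition init2 (a w : nat) : config := [:: a; (a + w).+1].

(* The two balls stay two balls, so only the gap [W] matters: from [w > 0] it
   moves to [w + 1] or [w - 1] with probability [r = eps (1 - eps)] each, and
   from [0] it jumps to [1] with probability [r].  The survival probabilities
   [g_n w = P(tau > n | W_0 = w)] obey [g_(n+1) = K (1_(>0) g_n)] for the
   transition operator [K] of [W].  They decrease to a bounded fixed point
   that is harmonic on [w > 0] and vanishes at [0], hence is linear, hence is
   zero: [tau] is finite almost surely.  On the other hand [w / (w + n)] is a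
   subsolution of the same recursion, so [g_(n+1) w >= r / (n + 1)], and
   [E[min(tau, n)] = sum_(k < n) g_k w] grows like the harmonic series. *)

From HB Require Import structures.
From mathcomp Require Import all_boot all_order all_algebra.
From mathcomp Require Import all_classical all_reals topology normedtype sequences.
From mathcomp Require Import zify ring lra.
Import Order.TTheory GRing.Theory Num.Theory numFieldNormedType.Exports.
Set Implicit Arguments. Unset Strict Implicit. Unset Printing Implicit Defensive.

Lemma zeta_init2 a w k : zeta (init2 a w) k = (k == a) || (k == (a + w).+1).
Proof. by rewrite /zeta !inE. Qed.

Lemma maxpos_init2 a w : maxpos (init2 a w) = (a + w).+1.
Proof. by rewrite /maxpos /init2 /=; lia. Qed.

Lemma gap_init2 a w : gap (init2 a w) = w.
Proof. by rewrite /gap /init2 /=; lia. Qed.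

Lemma below_cap_le1 cap g : cap_ge2 cap -> (g <= 1)%N -> below_cap cap g.
Proof. by case: cap => [c|] //= ? ?; lia. Qed.

Section TwoBalls.
Variables (cap : capacity) (a w : nat).
Hypotheses (cap2 : cap_ge2 cap) (a_gt0 : (0 < a)%N).

(* The carrier never holds more than one ball before the second ball, so a
   capacity [c >= 2] never blocks a pick-up. *)
Lemma carrier_init2 u k :
  carrier cap (init2 a w) u k =
  if (k <= a + w)%N then nat_of_bool (u a && (k == a))
  else ((u a && (w == 0%N)) + u (a + w).+1 - (k - (a + w).+1))%N.
Proof.
elim: k => [|k IH] /=; first by case: (u a) => /=; lia.
rewrite IH zeta_init2.
have [ka|ka] := eqVneq k.+1 a.
  have [le1 le2] : (k <= k.+1 + w)%N /\ (k < k.+1 + w)%N by lia.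
  rewrite -ka le1 le2 (ltn_eqF (ltnSn k)) andbF below_cap_le1 //=.
  by case: (u k.+1).
have [kq|kq] := eqVneq k.+1 (a + w).+1.
  case: kq => ->; rewrite /= leqnn ltnn subnn subn0 below_cap_le1 //; last by case: (_ && _).
  have -> : (a + w == a) = (w == 0%N) by rewrite -{2}[a]addn0 eqn_add2l.
  by case: (u a); case: (u _); case: (w == 0%N).
by case: (leqP k (a + w)) => ?; case: (ltnP k (a + w)) => ?;
  case: (u a) => /=; case: (u (a + w).+1) => /=; lia.
Qed.

(* With [w > 0] each ball jumps one site iff its coin succeeds.  With [w = 0]
   a successful first coin moves the pair forward as a block, and the gap opens
   only when the first coin fails and the second succeeds. *)
Definition step_init2 (b1 b2 : bool) : config :=
  if w == 0%N then init2 (a + b1 + (b1 && b2)) (~~ b1 && b2)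
  else init2 (a + b1) (w + b2 - b1).

Lemma sbbs_step_init2 bs :
  sbbs_step cap (init2 a w) bs = step_init2 (coins bs a) (coins bs (a + w).+1).
Proof.
apply: (@irr_sorted_eq _ ltn ltn_trans ltnn).
- exact: (sorted_filter ltn_trans _ (iota_ltn_sorted 1 _)).
- by rewrite /step_init2; case: (w == 0%N); case: (coins bs a);
    case: (coins bs _); rewrite /init2 /= andbT; lia.
move=> k; rewrite mem_filter mem_iota maxpos_init2 /new_zeta !carrier_init2.
rewrite zeta_init2 /step_init2 /init2.
case: k => [|j] /=.
  by case: (w == 0%N); case: (coins bs a); case: (coins bs _);
    rewrite !inE; apply/idP/idP; lia.
case: w => [|v] /=; case: (coins bs a); case: (coins bs _); rewrite !inE /=;
  case: (leqP j _) => ?; case: (leqP j.+1 _) => ?; apply/idP/idP; lia.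
Qed.

End TwoBalls.

Local Open Scope ring_scope.

Section CoinSums.
Variables (R : realType) (eps : R).

Definition coin_prob (b : bool) : R := if b then 1 - eps else eps.

Lemma coin_weight_cons b bs : coin_weight eps (b :: bs) = coin_prob b * coin_weight eps bs.
Proof. by rewrite /coin_weight big_cons. Qed.

Lemma big_all_bseqS m (F : seq bool -> R) :
  \sum_(bs <- all_bseq m.+1) F bs =
  \sum_(bs <- all_bseq m) F (true :: bs) + \sum_(bs <- all_bseq m) F (false :: bs).
Proof. by rewrite /= !big_cat !big_map big_nil /= addr0. Qed.

Lemma sum_coin_weight m : \sum_(bs <- all_bseq m) coin_weight eps bs = 1.
Proof.
elim: m => [|m IH]; first by rewrite big_seq1 /coin_weight big_nil.
rewrite big_all_bseqS.
under eq_bigr do rewrite coin_weight_cons.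
under [X in _ + X]eq_bigr do rewrite coin_weight_cons.
by rewrite -!mulr_sumr IH /coin_prob; ring.
Qed.

Lemma sum_coin_weight_nth m i (g : bool -> R) : (i < m)%N ->
  \sum_(bs <- all_bseq m) coin_weight eps bs * g (nth false bs i) =
  \sum_(b <- [:: true; false]) coin_prob b * g b.
Proof.
elim: m i => [|m IH] [|i] // lt_im; rewrite big_all_bseqS.
all: under eq_bigr do rewrite coin_weight_cons -mulrA.
all: under [X in _ + X]eq_bigr do rewrite coin_weight_cons -mulrA.
all: rewrite -!mulr_sumr /= ?IH // -?mulr_suml ?sum_coin_weight !big_cons big_nil.
- by rewrite !mul1r addr0.
- by rewrite /coin_prob; ring.
Qed.

Lemma sum_coin_weight_nth2 m i j (g : bool -> bool -> R) :
  (i < j)%N -> (j < m)%N ->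
  \sum_(bs <- all_bseq m) coin_weight eps bs * g (nth false bs i) (nth false bs j) =
  \sum_(b1 <- [:: true; false]) \sum_(b2 <- [:: true; false])
     coin_prob b1 * coin_prob b2 * g b1 b2.
Proof.
elim: m i j => [|m IH] [|i] [|j] // lt_ij lt_jm; rewrite big_all_bseqS.
all: under eq_bigr do rewrite coin_weight_cons -mulrA.
all: under [X in _ + X]eq_bigr do rewrite coin_weight_cons -mulrA.
all: rewrite -!mulr_sumr /= ?sum_coin_weight_nth ?IH ?lt_ij //.
all: by rewrite !big_cons !big_nil /=; ring.
Qed.

End CoinSums.

Section GapKernel.
Variables (R : realType) (eps : R).

Definition move_prob : R := eps * (1 - eps).

Definition gap_kernel (f : nat -> R) (w : nat) : R :=
  if w == 0%N then (1 - move_prob) * f 0%N + move_prob * f 1%N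
  else move_prob * f w.+1 + move_prob * f w.-1 + (1 - move_prob *+ 2) * f w.

Lemma sum_step_dist_init2 cap a w (F : config -> R) (f : nat -> R) :
  cap_ge2 cap -> (0 < a)%N ->
  (forall a' w', (0 < a')%N -> F (init2 a' w') = f w') ->
  \sum_(x <- step_dist eps cap (init2 a w)) x.1 * F x.2 = gap_kernel f w.
Proof.
move=> cap2 a_gt0 Ff.
rewrite /step_dist big_map maxpos_init2.
under eq_bigr do rewrite sbbs_step_init2 // /coins /=.
rewrite (@sum_coin_weight_nth2 R eps _ a.-1 (a + w)
  (fun b1 b2 => F (step_init2 a w b1 b2))); try lia.
rewrite !big_cons !big_nil /step_init2 /gap_kernel /move_prob /coin_prob.
case: w => [|w] /=; rewrite !Ff ?addn1 ?addn0 ?subn0 ?subn1 ?addnK //=; try lia.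
all: ring.
Qed.

End GapKernel.

Lemma tau_leS n s tr :
  tau_le n.+1 (s :: tr) = (gap (nth [::] tr 0) == 0%N) || tau_le n tr.
Proof. by rewrite /tau_le /= (iotaDl 1 1) has_map. Qed.

Lemma tau_minS n s tr :
  tau_min n.+1 (s :: tr) = (1 + (gap (nth [::] tr 0) != 0%N) * tau_min n tr)%N.
Proof.
rewrite /tau_min /= (iotaDl 1 1) find_map /gap_at /=.
case: (gap _ == 0%N) => /=; first by rewrite minnE; lia.
by rewrite minnSS mul1n add1n.
Qed.

Section Trajectories.
Variables (R : realType) (eps : R) (cap : capacity).

Definition prob_tau_gt (s : config) (n : nat) : R :=
  \sum_(p <- traj_dist eps cap n s) p.1 * (~~ tau_le n p.2)%:R.

Lemma big_traj_distS n s (G : seq config -> R) :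
  \sum_(p <- traj_dist eps cap n.+1 s) p.1 * G p.2 =
  \sum_(x <- step_dist eps cap s)
     x.1 * \sum_(p <- traj_dist eps cap n x.2) p.1 * G (s :: p.2).
Proof.
rewrite /= big_flatten big_map; apply: eq_bigr => x _.
by rewrite big_map mulr_sumr; apply: eq_bigr => p _ /=; rewrite mulrA.
Qed.

Lemma traj_dist_head n s p : p \in traj_dist eps cap n s -> nth [::] p.2 0 = s.
Proof.
case: n => [|n] /=; first by rewrite inE => /eqP ->.
by case/flattenP => _ /mapP[x _ ->] /mapP[q _ ->].
Qed.

Lemma sum_traj_dist n s : \sum_(p <- traj_dist eps cap n s) p.1 = 1.
Proof.
elim: n s => [|n IH] s; first by rewrite big_seq1.
under eq_bigr do rewrite -[_.1]mulr1.
rewrite (big_traj_distS n s (fun=> 1)) -[RHS](sum_coin_weight eps (maxpos s)).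
rewrite /step_dist big_map; apply: eq_bigr => bs _.
by under eq_bigr do rewrite mulr1; rewrite IH mulr1.
Qed.

Lemma prob_tau_leE s n : prob_tau_le eps cap s n = 1 - prob_tau_gt s n.
Proof.
rewrite /prob_tau_le /prob_tau_gt -[X in _ = X - _](sum_traj_dist n s) -sumrB.
by apply: eq_bigr => p _; case: (tau_le n p.2); rewrite /= ?mulr1 ?mulr0 ?subr0 ?subrr.
Qed.

Lemma prob_tau_gt0 s : prob_tau_gt s 0 = 1.
Proof. by rewrite /prob_tau_gt big_seq1 mul1r. Qed.

Lemma prob_tau_gtS s n : prob_tau_gt s n.+1 =
  \sum_(x <- step_dist eps cap s) x.1 * ((gap x.2 != 0%N)%:R * prob_tau_gt x.2 n).
Proof.
rewrite /prob_tau_gt (big_traj_distS n s (fun tr => (~~ tau_le n.+1 tr)%:R)).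
apply: eq_bigr => x _; congr (_ * _).
rewrite mulr_sumr !big_seq; apply: eq_bigr => p /traj_dist_head hp.
by rewrite tau_leS hp negb_or -mulnb natrM mulrCA.
Qed.

Lemma exp_tau_min0 s : exp_tau_min eps cap s 0 = 0.
Proof. by rewrite /exp_tau_min big_seq1 /tau_min minn0 mulr0. Qed.

Lemma exp_tau_minS s n : exp_tau_min eps cap s n.+1 =
  1 + \sum_(x <- step_dist eps cap s)
        x.1 * ((gap x.2 != 0%N)%:R * exp_tau_min eps cap x.2 n).
Proof.
rewrite /exp_tau_min (big_traj_distS n s (fun tr => (tau_min n.+1 tr)%:R)).
rewrite -[X in X + _](sum_coin_weight eps (maxpos s)) /step_dist !big_map -big_split.
apply: eq_bigr => bs _ /=; rewrite -[X in X + _]mulr1 -mulrDr; congr (_ * _).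
rewrite mulr_sumr -[X in X + _](sum_traj_dist n (sbbs_step cap s bs)).
rewrite -big_split !big_seq.
apply: eq_bigr => p /traj_dist_head hp /=.
by rewrite tau_minS hp natrD natrM; ring.
Qed.

End Trajectories.

Section GapChain.
Variables (R : realType) (eps : R).

Definition kill0 (f : nat -> R) (v : nat) : R := (v != 0%N)%:R * f v.

Fixpoint gap_surv (n : nat) : nat -> R :=
  if n is n'.+1 then gap_kernel eps (kill0 (gap_surv n')) else fun=> 1.

Fixpoint gap_mean (n : nat) : nat -> R :=
  if n is n'.+1 then fun w => 1 + gap_kernel eps (kill0 (gap_mean n')) w
  else fun=> 0.

Lemma prob_tau_gt_init2 cap n a w : cap_ge2 cap -> (0 < a)%N ->
  prob_tau_gt eps cap (init2 a w) n = gap_surv n w.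
Proof.
move=> cap2; elim: n a w => [|n IH] a w a_gt0; first exact: prob_tau_gt0.
rewrite prob_tau_gtS.
apply: (@sum_step_dist_init2 R eps cap a w
         (fun c => (gap c != 0%N)%:R * prob_tau_gt eps cap c n))
  => // a' w' a'_gt0.
by rewrite gap_init2 IH.
Qed.

Lemma exp_tau_min_init2 cap n a w : cap_ge2 cap -> (0 < a)%N ->
  exp_tau_min eps cap (init2 a w) n = gap_mean n w.
Proof.
move=> cap2; elim: n a w => [|n IH] a w a_gt0; first exact: exp_tau_min0.
rewrite exp_tau_minS; congr (_ + _).
apply: (@sum_step_dist_init2 R eps cap a w
         (fun c => (gap c != 0%N)%:R * exp_tau_min eps cap c n))
  => // a' w' a'_gt0.
by rewrite gap_init2 IH.
Qed.

Lemma gap_kernel_sum n (F : nat -> nat -> R) w :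
  gap_kernel eps (fun v => \sum_(k < n) F k v) w = \sum_(k < n) gap_kernel eps (F k) w.
Proof. by rewrite /gap_kernel; case: (w == 0%N); rewrite !mulr_sumr -!big_split. Qed.

Lemma gap_mean_sum n w : gap_mean n w = \sum_(k < n) gap_surv k w.
Proof.
elim: n w => [|n IH] w; first by rewrite big_ord0.
rewrite big_ord_recl /=; congr (_ + _).
transitivity (\sum_(k < n) gap_kernel eps (kill0 (gap_surv k)) w); last first.
  by apply: eq_bigr.
rewrite -(@gap_kernel_sum n (fun k => kill0 (gap_surv k))); congr gap_kernel.
by apply: funext => v; rewrite /kill0 IH mulr_sumr.
Qed.

End GapChain.

Local Open Scope classical_set_scope.

Lemma arith_progression_bounded_eq0 (R : archiRealFieldType) (h : nat -> R) :
  h 0%N = 0 -> (forall k, h k.+2 = 2 * h k.+1 - h k) ->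
  (forall k, 0 <= h k <= 1) -> forall k, h k = 0.
Proof.
move=> h0 h_rec h_bnd.
have h_lin k : h k = k%:R * h 1%N.
  suff : h k = k%:R * h 1%N /\ h k.+1 = k.+1%:R * h 1%N by case.
  elim: k => [|k [IHk IHk1]]; first by rewrite h0 !mul0r mul1r.
  by split=> //; rewrite h_rec IHk IHk1 -[k.+2]addn2 -[k.+1]addn1 !natrD; ring.
suff h1_0 : h 1%N = 0 by move=> k; rewrite h_lin h1_0 mulr0.
have /andP[h1_ge0 _] := h_bnd 1%N.
apply/eqP; rewrite eq_le h1_ge0 andbT leNgt; apply/negP => h1_gt0.
set n := (Num.truncn (h 1%N)^-1).+1.
have /andP[_] := h_bnd n; rewrite h_lin; apply/negP; rewrite -ltNge.
by rewrite -ltr_pdivrMr // div1r; exact: Num.Theory.truncnS_gt.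
Qed.

Section GapChainLimit.
Variables (R : realType) (eps : R).
Hypothesis eps01 : 0 < eps < 1.

Lemma move_prob_gt0 : 0 < move_prob eps.
Proof. by case/andP: eps01 => eps_gt0 eps_lt1; rewrite mulr_gt0 // subr_gt0. Qed.

Lemma move_prob_le_quarter : move_prob eps <= 4^-1.
Proof. by have := sqr_ge0 (eps - 2^-1); rewrite /move_prob expr2; nra. Qed.

Lemma le_gap_kernel f g w :
  (forall v, f v <= g v) -> gap_kernel eps f w <= gap_kernel eps g w.
Proof.
move=> le_fg; have r_gt0 := move_prob_gt0; have r_le := move_prob_le_quarter.
rewrite /gap_kernel; case: ifP => _.
  by apply: lerD; apply: ler_wpM2l => //; lra.
by rewrite !lerD // ler_wpM2l //; rewrite ?mulr2n; lra.
Qed.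

Lemma gap_kernel_cst c w : gap_kernel eps (fun=> c) w = c.
Proof. by rewrite /gap_kernel mulr2n; case: ifP => _; ring. Qed.

Lemma kill0_bound (f : nat -> R) v : 0 <= f v <= 1 -> 0 <= kill0 f v <= 1.
Proof. by rewrite /kill0; case: (v != 0%N); rewrite ?mul1r ?mul0r ?lexx ?ler01. Qed.

Lemma gap_surv_bound n w : 0 <= gap_surv eps n w <= 1.
Proof.
elim: n w => [|n IH] w /=; first by rewrite ler01 lexx.
have kill0_IH v := kill0_bound (IH v).
rewrite -[X in X <= _ <= _](gap_kernel_cst 0 w) -[X in _ <= _ <= X](gap_kernel_cst 1 w).
by rewrite !le_gap_kernel // => v; case/andP: (kill0_IH v).
Qed.

Lemma gap_surv_nonincreasing w : nonincreasing_seq (gap_surv eps ^~ w).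
Proof.
apply/nonincreasing_seqP => n; elim: n w => [|n IH] w.
  by case/andP: (gap_surv_bound 1 w).
by apply: le_gap_kernel => v; rewrite /kill0 ler_wpM2l ?IH.
Qed.

Lemma gap_surv_cvgn w : cvgn (gap_surv eps ^~ w).
Proof.
apply: nonincreasing_is_cvgn; first exact: gap_surv_nonincreasing.
by exists 0 => _ [n _ <-]; case/andP: (gap_surv_bound n w).
Qed.

Lemma gap_kernel_cvg (f : nat -> nat -> R) (l : nat -> R) w :
  (forall v, f ^~ v @ \oo --> l v) ->
  (fun n => gap_kernel eps (f n) w) @ \oo --> gap_kernel eps l w.
Proof.
move=> f_l; rewrite /gap_kernel; case: ifP => _.
  by apply: cvgD; apply: cvgMl_tmp.
by apply: cvgD; [apply: cvgD|]; apply: cvgMl_tmp.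
Qed.

Let surv_lim w := limn (gap_surv eps ^~ w).

Lemma surv_lim_bound w : 0 <= surv_lim w <= 1.
Proof.
have cvg := @gap_surv_cvgn w.
apply/andP; split.
  by apply: limr_ge => //; apply: nearW => n; case/andP: (gap_surv_bound n w).
exact: (nonincreasing_cvgn_ge (gap_surv_nonincreasing w) cvg 0).
Qed.

Lemma surv_lim_fixpoint w : surv_lim w = gap_kernel eps (kill0 surv_lim) w.
Proof.
have lim_w : (fun n => gap_surv eps n.+1 w) @ \oo --> surv_lim w.
  by have := @gap_surv_cvgn w; rewrite -cvg_shiftS.
have lim_kernel : (fun n => gap_surv eps n.+1 w) @ \oo --> gap_kernel eps (kill0 surv_lim) w.
  by apply: gap_kernel_cvg => v; apply: cvgMl_tmp; exact: gap_surv_cvgn.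
exact: cvg_unique _ lim_w lim_kernel.
Qed.

Lemma surv_lim_eq0 w : surv_lim w = 0.
Proof.
have harm0 : forall k, kill0 surv_lim k = 0.
  apply: arith_progression_bounded_eq0; first by rewrite /kill0 mul0r.
    move=> k; have := surv_lim_fixpoint k.+1; have := move_prob_gt0.
    rewrite /gap_kernel /kill0 /= !mul1r => r_gt0 fix_k.
    apply: (mulIf (lt0r_neq0 r_gt0)); set r := move_prob eps in r_gt0 fix_k *.
    nra.
  by move=> k; apply: kill0_bound; exact: surv_lim_bound.
case: w => [|k]; last by have := harm0 k.+1; rewrite /kill0 mul1r.
by rewrite surv_lim_fixpoint /gap_kernel /= !harm0 !mulr0 addr0.
Qed.

Lemma gap_surv_cvg0 w : gap_surv eps ^~ w @ \oo --> 0.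
Proof. by rewrite -(surv_lim_eq0 w); exact: gap_surv_cvgn. Qed.

End GapChainLimit.

Lemma ratio_subsolution (R : realFieldType) (r x N : R) :
  0 <= r <= 4^-1 -> 1 <= x -> 0 <= N ->
  x / (x + N + 1) <= r * ((x + 1) / (x + 1 + N)) + r * ((x - 1) / (x - 1 + N))
                     + (1 - r *+ 2) * (x / (x + N)).
Proof.
move=> /andP[r_ge0 r_le] + N_ge0; rewrite le_eqVlt => /orP[/eqP <-|x_gt1].
  rewrite subrr mul0r mulr0 addr0 -subr_ge0.
  have -> : r * ((1 + 1) / (1 + 1 + N)) + (1 - r *+ 2) * (1 / (1 + N)) - 1 / (1 + N + 1)
            = (1 - 2 * r) / ((N + 1) * (N + 2)).
    by rewrite mulr2n; field; apply/andP; split; apply/eqP; lra.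
  by rewrite divr_ge0 ?mulr_ge0; lra.
rewrite -subr_ge0.
have -> : r * ((x + 1) / (x + 1 + N)) + r * ((x - 1) / (x - 1 + N))
          + (1 - r *+ 2) * (x / (x + N)) - x / (x + N + 1) =
          (x * (x - 1) + N * (x - 2 * r)) / ((x - 1 + N) * (x + N) * (x + N + 1)).
  by rewrite mulr2n; field; apply/and3P; split; apply/eqP; lra.
by rewrite divr_ge0 ?mulr_ge0; nra.
Qed.

Lemma harmonic_series_cvgy (R : realType) : series (@harmonic R) @ \oo --> +oo.
Proof.
apply: nondecreasing_dvgn_lt; last exact: dvg_harmonic.
by apply: nondecreasing_series => n _ _; exact: harmonic_ge0.
Qed.

Section GapChainLowerBound.
Variables (R : realType) (eps : R).
Hypothesis eps01 : 0 < eps < 1.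

Let ratio (n v : nat) : R := v%:R / (v%:R + n%:R).

Lemma ratio_le_kill0_gap_surv n v : ratio n v <= kill0 (gap_surv eps n) v.
Proof.
have r_bnd : 0 <= move_prob eps <= 4^-1.
  by rewrite ltW ?move_prob_gt0 ?move_prob_le_quarter.
elim: n v => [|n IH] [|k]; rewrite /ratio /kill0 ?mul0r ?mul1r //.
  by rewrite addr0 divff // pnatr_eq0.
apply: le_trans (le_gap_kernel eps01 k.+1 IH); rewrite /gap_kernel /ratio /=.
have -> : k%:R = k.+1%:R - 1 :> R by rewrite -natr1 addrK.
rewrite -[k.+2%:R]natr1 -[n.+1%:R]natr1 addrA.
by apply: ratio_subsolution; rewrite ?ler1n ?ler0n.
Qed.

Lemma gap_surv_lb n w : move_prob eps / n.+1%:R <= gap_surv eps n.+1 w.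
Proof.
have r_gt0 := move_prob_gt0 eps01; have r_le := move_prob_le_quarter eps.
case: w => [|k].
  rewrite /= /gap_kernel /= {1}/kill0 mul0r mulr0 add0r ler_pM2l // -natr1.
  by have := ratio_le_kill0_gap_surv n 1; rewrite /ratio mulr1n div1r addrC.
have := ratio_le_kill0_gap_surv n.+1 k.+1; rewrite /kill0 mul1r; apply: le_trans.
rewrite /ratio -subr_ge0 -!natr1.
have K_ge0 : 0 <= k%:R :> R by exact: ler0n.
have N_ge0 : 0 <= n%:R :> R by exact: ler0n.
set K := k%:R in K_ge0 *; set N := n%:R in N_ge0 *.
have -> : (K + 1) / (K + 1 + (N + 1)) - move_prob eps / (N + 1) =
  ((K + 1) * (N + 1) - move_prob eps * (K + N + 2)) / ((K + N + 2) * (N + 1)).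
  by field; apply/andP; split; apply/eqP; lra.
by rewrite divr_ge0 ?mulr_ge0; nra.
Qed.

Lemma gap_mean_lb N w : move_prob eps * series (@harmonic R) N <= gap_mean eps N.+1 w.
Proof.
rewrite gap_mean_sum big_ord_recl /series /= big_mkord mulr_sumr.
rewrite -[leLHS]add0r lerD ?ler01 //.
by apply: ler_sum => i _; exact: gap_surv_lb.
Qed.

Lemma gap_mean_cvgy w : gap_mean eps ^~ w @ \oo --> +oo.
Proof.
rewrite -cvg_shiftS.
apply: (@ger_cvgy _ _ _ _ (fun N => move_prob eps * series (@harmonic R) N)).
  by apply: nearW => N; exact: gap_mean_lb.
apply/cvgryPge => A; have r_gt0 := move_prob_gt0 eps01.
move/cvgryPge: (@harmonic_series_cvgy R) => /(_ (A / move_prob eps)).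
by apply: filterS => n; rewrite -(ler_pdivrMl _ _ r_gt0) mulrC.
Qed.

End GapChainLowerBound.

Theorem mainTheorem9 (R : realType) (eps : R) (cap : capacity) (w a : nat) :
  0 < eps < 1 -> cap_ge2 cap -> (0 < a)%N ->
  ((fun n => prob_tau_le eps cap (init2 a w) n) @ \oo --> (1 : R)) /\
  ((fun n => exp_tau_min eps cap (init2 a w) n) @ \oo --> +oo).
Proof.
move=> eps01 cap2 a_gt0; split.
  have -> : (fun n => prob_tau_le eps cap (init2 a w) n) = (fun n => 1 - gap_surv eps n w).
    by apply: funext => n; rewrite prob_tau_leE prob_tau_gt_init2.
  rewrite -[X in _ --> X](subr0 (1 : R)).
  exact: cvgB (cvg_cst (1 : R)) (gap_surv_cvg0 eps01 w).
have -> : (fun n => exp_tau_min eps cap (init2 a w) n) = gap_mean eps ^~ w.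
  by apply: funext => n; rewrite exp_tau_min_init2.
exact: gap_mean_cvgy.
Qed.
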